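(* Let $G=(V,E)$ be a finite graph with a Bernoulli bond percolation on it, and let $a,b,c\in V$. If $\mathbb{P}(ab\|c)=0$, then $$\mathbb{P}(a\|b\|c)\,\mathbb{P}(abc)=\mathbb{P}(ac\|b)\,\mathbb{P}(a\|bc)\quad\text{and}\quad \mathbb{P}(abc)=\mathbb{P}(ac)\,\mathbb{P}(bc).$$
   Context: A Bernoulli bond percolation on $G$ declares each edge $e\in E$ open independently with its own probability $p_e\in[0,1]$; clusters are connected components of the subgraph of open edges. Notation: $\mathbb{P}(abc)$ is the probability that $a,b,c$ lie in one cluster; $\mathbb{P}(a\|b\|c)$ that they lie in three pairwise different clusters; $\mathbb{P}(ab\|c)$ that $a,b$ lie in the same cluster and $c$ lies in a different cluster (similarly $\mathbb{P}(ac\|b)$ and $\mathbb{P}(a\|bc)$); $\mathbb{P}(ac)$ is the probability that $a$ and $c$ lie in the same cluster (similarly $\mathbb{P}(bc)$). *)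

From mathcomp Require Import all_boot all_order all_algebra.
Set Implicit Arguments. Unset Strict Implicit. Unset Printing Implicit Defensive.
Import Order.TTheory GRing.Theory Num.Theory.
Local Open Scope ring_scope.

Section Percolation.
Variables (V E : finType) (ends : E -> V * V).

Definition open_adj (w : {ffun E -> bool}) : rel V :=
  fun x y => [exists e, w e && ((ends e == (x, y)) || (ends e == (y, x)))].

Definition conn (w : {ffun E -> bool}) (x y : V) : bool :=
  connect (open_adj w) x y.

Variable R : realFieldType.
Variable p : E -> R.

Definition weight (w : {ffun E -> bool}) : R :=
  \prod_(e : E) (if w e then p e else 1 - p e).

Definition Pr (A : pred {ffun E -> bool}) : R :=
  \sum_(w : {ffun E -> bool} | A w) weight w.

Variables a b c : V.

Definition ev_abc : pred {ffun E -> bool} := fun w => conn w a b && conn w b c.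
Definition ev_a_b_c : pred {ffun E -> bool} :=
  fun w => [&& ~~ conn w a b, ~~ conn w b c & ~~ conn w a c].
Definition ev_ab_c : pred {ffun E -> bool} := fun w => conn w a b && ~~ conn w a c.
Definition ev_ac_b : pred {ffun E -> bool} := fun w => conn w a c && ~~ conn w a b.
Definition ev_a_bc : pred {ffun E -> bool} := fun w => conn w b c && ~~ conn w a b.
Definition ev_ac : pred {ffun E -> bool} := fun w => conn w a c.
Definition ev_bc : pred {ffun E -> bool} := fun w => conn w b c.

End Percolation.

From mathcomp Require Import all_boot all_order all_algebra.
From mathcomp Require Import ring.
Set Implicit Arguments. Unset Strict Implicit. Unset Printing Implicit Defensive.
Import Order.TTheory GRing.Theory Num.Theory.
Local Open Scope ring_scope.

(* Let C be the set of vertices joined to c by edges of probability 1, and D the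
   set of vertices reachable from a along edges of positive probability without
   entering C.  Up to null configurations, {a ~ c} depends only on the edges
   touching D, because an open path from a stays in D until it reaches C, and C
   is surely joined to c.  If b were in D, opening the sure edges together with
   the possible edges inside D would give a configuration of positive weight in
   which a ~ b but not a ~ c, contradicting P(ab|c) = 0.  So b lies outside D,
   and by the same argument {b ~ c} depends only on the edges not touching D.
   The two events are therefore independent, and off the null event {ab|c} the
   four events of the statement are the intersections of {a ~ c}, {b ~ c} and
   their complements. *)

Section ConnectUntil.
Variables (T : finType) (e e' : rel T).

Lemma connect_until (I C : pred T) x y :
  (forall u v, I u -> ~~ C u -> e u v -> (I v || C v) && e' u v) ->
  I x || C x -> connect e x y -> C y -> exists2 z, C z & connect e' x z.
Proof.
move=> step + /connectP[s]; elim: s x => [|x1 s IHs] x /=.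
  by move=> _ _ -> Cx; exists x => //; apply: connect0.
case Cx: (C x); first by exists x => //; apply: connect0.
rewrite orbF => Ix /andP[exx1 path_s] lst Cy.
case/andP: (step _ _ Ix (negbT Cx) exx1) => Ix1 e'xx1.
have [z Cz x1z] := IHs x1 Ix1 path_s lst Cy.
by exists z => //; apply: connect_trans (connect1 e'xx1) x1z.
Qed.

Lemma connect_sub_in (I : pred T) x y :
  (forall u v, I u -> e u v -> I v && e' u v) -> I x -> connect e x y -> connect e' x y.
Proof.
move=> step Ix xy.
have [||z /eqP-> //] := @connect_until I (pred1 y) x y _ _ xy (eqxx y).
- by move=> u v Iu _ /(step _ _ Iu)/andP[-> ->].
- by rewrite Ix.
Qed.

End ConnectUntil.

Section Configurations.
Variables (E : finType) (R : realFieldType) (p : E -> R).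
Local Notation cfg := {ffun E -> bool}.

Definition sure : cfg := [ffun e => p e == 1].
Definition possible : cfg := [ffun e => p e != 0].

Lemma sure_possible e : sure e -> possible e.
Proof. by rewrite !ffunE => /eqP->; rewrite oner_neq0. Qed.

Lemma weight_neq0P (w : cfg) :
  reflect ((forall e, sure e -> w e) /\ (forall e, w e -> possible e)) (weight p w != 0).
Proof.
apply: (iffP (prodf_neq0 _ _)) => [nz | [sure_w w_possible] e _].
  split=> e; have := nz e isT; rewrite ffunE; case: (w e) => //.
  by rewrite subr_eq0 eq_sym => /negbTE->.
have := sure_w e; have := w_possible e; rewrite !ffunE.
by case: (w e) => [/(_ isT)//|_]; rewrite subr_eq0 eq_sym; case: eqP => // _ /(_ isT).
Qed.

Lemma sum_weight : \sum_(w : cfg) weight p w = 1.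
Proof.
rewrite /weight -(bigA_distr_bigA (fun e (open : bool) => if open then p e else 1 - p e)).
by apply: big1 => e _; rewrite big_bool /= addrC subrK.
Qed.

Definition glue (F : {set E}) (w1 w2 : cfg) : cfg :=
  [ffun e => if e \in F then w1 e else w2 e].

Lemma weight_glue F w1 w2 :
  weight p (glue F w1 w2) * weight p (glue F w2 w1) = weight p w1 * weight p w2.
Proof.
rewrite /weight -!big_split /=; apply: eq_bigr => e _; rewrite !ffunE.
by case: (e \in F); rewrite // mulrC.
Qed.

Definition determined_on (F : {set E}) (X : pred cfg) :=
  forall u v, weight p u != 0 -> weight p v != 0 -> {in F, u =1 v} -> X u -> X v.

Lemma determined_on_eq F X u v : determined_on F X ->
  weight p u != 0 -> weight p v != 0 -> {in F, u =1 v} -> X u = X v.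
Proof.
move=> dX nzu nzv uv; apply/idP/idP; first exact: dX.
by apply: dX => // e /uv.
Qed.

Lemma determined_onC F X : determined_on F X -> determined_on F (fun w => ~~ X w).
Proof. by move=> dX u v nzu nzv uv; rewrite (determined_on_eq dX nzu nzv uv). Qed.

Lemma Pr_indep F X Y : determined_on F X -> determined_on (~: F) Y ->
  Pr p (fun w => X w && Y w) = Pr p X * Pr p Y.
Proof.
move=> dX dY; rewrite /Pr big_distrlr pair_big /=.
rewrite -[LHS]mulr1 -sum_weight big_distrlr pair_big /=.
(* Gluing exchanges the F-parts of two configurations; this involution on pairs
   preserves the product weight and turns X w1 && Y w1 into X w1 && Y w2. *)
pose swap (ww : cfg * cfg) := (glue F ww.1 ww.2, glue F ww.2 ww.1).
have swapK : involutive swap.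
  by move=> [w1 w2]; congr pair; apply/ffunP => e; rewrite !ffunE; case: (e \in F).
rewrite (reindex_inj (inv_inj swapK)) /= [LHS]big_mkcond [RHS]big_mkcond /=.
apply: eq_bigr => -[w1 w2] _ /=; rewrite weight_glue andbT.
have [->|nz] := eqVneq (weight p w1 * weight p w2) 0; first by rewrite !if_same.
have nz12 : weight p (glue F w1 w2) != 0.
  by move: nz; rewrite -(weight_glue F) mulf_eq0 negb_or => /andP[].
move: nz; rewrite mulf_eq0 negb_or => /andP[nz1 nz2].
rewrite (determined_on_eq dX nz12 nz1) => [|e eF]; last by rewrite ffunE eF.
by rewrite (determined_on_eq dY nz12 nz2) // => e; rewrite inE ffunE => /negbTE->.
Qed.

Lemma eq_Pr X Y : X =1 Y -> Pr p X = Pr p Y.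
Proof. exact: eq_bigl. Qed.

Hypothesis p01 : forall e, 0 <= p e <= 1.

Lemma weight_ge0 w : 0 <= weight p w.
Proof.
apply: prodr_ge0 => e _; have /andP[p_ge0 p_le1] := p01 e.
by case: (w e); rewrite ?subr_ge0.
Qed.

Lemma Pr_eq0_weight X w : Pr p X = 0 -> X w -> weight p w = 0.
Proof. by move=> X0 Xw; apply: (psumr_eq0P (fun w _ => weight_ge0 w) X0). Qed.

Lemma Pr_eq_null N X Y : Pr p N = 0 -> (forall w, ~~ N w -> X w = Y w) -> Pr p X = Pr p Y.
Proof.
move=> N0 XY; rewrite /Pr [LHS]big_mkcond [RHS]big_mkcond; apply: eq_bigr => w _.
have [Nw|/XY->//] := boolP (N w).
by rewrite (Pr_eq0_weight N0 Nw) !if_same.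
Qed.

End Configurations.

Section Clusters.
Variables (V E : finType) (ends : E -> V * V).
Local Notation cfg := {ffun E -> bool}.

Lemma open_adj_sym (w : cfg) : symmetric (open_adj ends w).
Proof.
by move=> x y; apply/existsP/existsP => -[e /andP[we xy]]; exists e; rewrite we orbC.
Qed.

Lemma conn_sym (w : cfg) : symmetric (conn ends w).
Proof. exact: sym_connect_sym (open_adj_sym w). Qed.

Lemma open_adj_mono (u v : cfg) : (forall e, u e -> v e) ->
  subrel (open_adj ends u) (open_adj ends v).
Proof.
by move=> uv x y /existsP[e /andP[ue xy]]; apply/existsP; exists e; rewrite uv.
Qed.

Lemma conn_mono (u v : cfg) : (forall e, u e -> v e) -> subrel (conn ends u) (conn ends v).
Proof. by move=> uv; apply: connect_sub => x y /(open_adj_mono uv)/connect1. Qed.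

Variables a b c : V.

Lemma ev_abcE w : ev_abc ends a b c w = ev_ac ends a c w && ev_bc ends b c w.
Proof.
rewrite /ev_abc /ev_ac /ev_bc.
have [bc|] := boolP (conn ends w b c); last by rewrite !andbF.
by rewrite !andbT /conn (same_connect_r (conn_sym w) bc).
Qed.

Lemma ev_ac_bE w : ev_ac_b ends a b c w = ev_ac ends a c w && ~~ ev_bc ends b c w.
Proof.
rewrite /ev_ac_b /ev_ac /ev_bc; have [ac|] := boolP (conn ends w a c); last by [].
by rewrite /conn (same_connect (conn_sym w) ac) -/(conn ends w b c) conn_sym.
Qed.

Lemma ev_a_bcE w : ev_a_bc ends a b c w = ~~ ev_ac ends a c w && ev_bc ends b c w.
Proof.
rewrite /ev_a_bc /ev_ac /ev_bc andbC.
have [bc|] := boolP (conn ends w b c); last by rewrite !andbF.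
by rewrite !andbT /conn (same_connect_r (conn_sym w) bc).
Qed.

Lemma ev_a_b_cE w : ~~ ev_ab_c ends a b c w ->
  ev_a_b_c ends a b c w = ~~ ev_ac ends a c w && ~~ ev_bc ends b c w.
Proof.
rewrite /ev_ab_c /ev_a_b_c /ev_ac /ev_bc.
by case: (conn ends w a b) => /=; [move/negPn-> | rewrite andbC].
Qed.

End Clusters.

Section Region.
Variables (V E : finType) (ends : E -> V * V) (R : realFieldType) (p : E -> R) (a c : V).
Local Notation cfg := {ffun E -> bool}.

Definition sure_cluster : pred V := conn ends (sure p) c.

Definition free_adj : rel V :=
  fun x y => [&& ~~ sure_cluster x, ~~ sure_cluster y & open_adj ends (possible p) x y].

Definition region : pred V := fun v => connect free_adj a v && ~~ sure_cluster v.

Definition region_edges : {set E} := [set e | region (ends e).1 || region (ends e).2].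

Lemma mem_region_edges e x y : (ends e == (x, y)) || (ends e == (y, x)) ->
  (e \in region_edges) = region x || region y.
Proof. by rewrite inE => /orP[] /eqP-> //=; rewrite orbC. Qed.

Lemma region_adj x y :
  region x -> ~~ sure_cluster y -> open_adj ends (possible p) x y -> region y.
Proof.
case/andP=> ax nCx nCy xy; rewrite /region nCy andbT.
by apply: connect_trans ax (connect1 _); rewrite /free_adj nCx nCy.
Qed.

Lemma region_cluster_a : region a || sure_cluster a.
Proof. by rewrite /region connect0 orNb. Qed.

Lemma region_start v : region v -> region a.
Proof.
rewrite /region connect0.
by case/andP=> /connectP[[|y s] /= pth ->] //; case/andP: pth => /and3P[].
Qed.

Lemma conn_cluster_transfer (I : pred V) (u v : cfg) x :
  weight p v != 0 ->
  (forall y z, I y -> ~~ sure_cluster y -> open_adj ends u y z ->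
     (I z || sure_cluster z) && open_adj ends v y z) ->
  I x || sure_cluster x -> conn ends u x c -> conn ends v x c.
Proof.
move=> /weight_neq0P[sure_v _] step Ix xc.
have [y Cy xy] := connect_until step Ix xc (connect0 _ c).
apply: connect_trans xy _; have := conn_mono sure_v Cy.
by rewrite conn_sym.
Qed.

Lemma conn_ac_determined : determined_on p region_edges (ev_ac ends a c).
Proof.
move=> u v /weight_neq0P[_ u_possible] nzv uv.
apply: (conn_cluster_transfer (I := region)) nzv _ region_cluster_a.
move=> y z Ry _ uyz; case/existsP: (uyz) => e /andP[ue yz].
have -> : open_adj ends v y z.
  by apply/existsP; exists e; rewrite -uv ?ue ?(mem_region_edges yz) ?Ry.
have [Cz|nCz] := boolP (sure_cluster z); first by rewrite orbT.
by rewrite (region_adj Ry nCz) ?(open_adj_mono u_possible uyz).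
Qed.

Lemma conn_bc_determined b :
  ~~ region b -> determined_on p (~: region_edges) (ev_bc ends b c).
Proof.
move=> nRb u v /weight_neq0P[_ u_possible] nzv uv.
apply: (conn_cluster_transfer (I := predC region)) nzv _ _; last by rewrite /= nRb.
move=> y z /= nRy nCy uyz; case/existsP: (uyz) => e /andP[ue yz].
have nRz : ~~ region z.
  apply: contra nRy => Rz; apply: region_adj Rz nCy _.
  by rewrite open_adj_sym (open_adj_mono u_possible uyz).
rewrite nRz; apply/existsP; exists e.
by rewrite -uv ?ue // in_setC (mem_region_edges yz) negb_or nRy nRz.
Qed.

Definition region_opening : cfg :=
  [ffun e => sure p e || [&& region (ends e).1, region (ends e).2 & possible p e]].

Lemma weight_region_opening : weight p region_opening != 0.
Proof.
apply/weight_neq0P; split=> e; rewrite [region_opening e]ffunE; first by move->.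
by case/orP=> [/sure_possible | /and3P[]].
Qed.

Lemma conn_region_opening v : region v -> conn ends region_opening a v.
Proof.
move=> Rv; case/andP: (Rv) => av _.
apply: (connect_sub_in (I := region)) (region_start Rv) av => x y Rx /and3P[_ nCy xy].
have Ry := region_adj Rx nCy xy; rewrite Ry.
case/existsP: xy => e /andP[pe xy]; apply/existsP; exists e.
by rewrite xy ffunE pe andbT; case/orP: xy => /eqP-> /=; rewrite Rx Ry orbT.
Qed.

Lemma region_closed : closed (open_adj ends region_opening) region.
Proof.
apply: (intro_closed (conn_sym ends region_opening)) => x y /existsP[e /andP[we xy]].
rewrite -!topredE /= => Rx; move: we; rewrite ffunE => /orP[se | /and3P[R1 R2 _]]; last first.
  by case/orP: xy R1 R2 => /eqP-> /=.
have sxy : open_adj ends (sure p) x y by apply/existsP; exists e; rewrite se.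
have nCy : ~~ sure_cluster y.
  apply: contra (proj2 (andP Rx)) => Cy; apply: connect_trans Cy (connect1 _).
  by rewrite open_adj_sym.
exact: region_adj Rx nCy (open_adj_mono (sure_possible (p:=p)) sxy).
Qed.

Lemma notin_region b : (forall e, 0 <= p e <= 1) ->
  Pr p (ev_ab_c ends a b c) = 0 -> ~~ region b.
Proof.
move=> p01 null; apply/negP => Rb.
have nac : ~~ conn ends region_opening a c.
  apply/negP => /(closed_connect region_closed).
  by rewrite -!topredE /= (region_start Rb) /region /sure_cluster /conn connect0 andbF.
have := Pr_eq0_weight p01 (w := region_opening) null.
rewrite /ev_ab_c (conn_region_opening Rb) nac => /(_ isT)/eqP.
exact/negP/weight_region_opening.
Qed.

End Region.

Theorem mainTheorem7 (V E : finType) (ends : E -> V * V) (R : realFieldType)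
  (p : E -> R) (hp : forall e, 0 <= p e <= 1) (a b c : V) :
  Pr p (ev_ab_c ends a b c) = 0 ->
  Pr p (ev_a_b_c ends a b c) * Pr p (ev_abc ends a b c)
    = Pr p (ev_ac_b ends a b c) * Pr p (ev_a_bc ends a b c)
  /\ Pr p (ev_abc ends a b c)
    = Pr p (ev_ac ends a c) * Pr p (ev_bc ends b c).
Proof.
move=> null_ab_c.
have dA := @conn_ac_determined _ _ ends _ p a c.
have dB := conn_bc_determined (notin_region hp null_ab_c).
rewrite (eq_Pr p (ev_abcE ends a b c)) (eq_Pr p (ev_ac_bE ends a b c)).
rewrite (eq_Pr p (ev_a_bcE ends a b c)) (Pr_eq_null hp null_ab_c (@ev_a_b_cE _ _ ends a b c)).
rewrite (Pr_indep dA dB) (Pr_indep dA (determined_onC dB)).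
rewrite (Pr_indep (determined_onC dA) dB) (Pr_indep (determined_onC dA) (determined_onC dB)).
by split; [ring|].
Qed.
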